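(* Let $\Gamma$ be a finite multiset of formulas and $B$ a formula such that $\Gamma\longrightarrow B$ has a $\mathbf{C}$-proof in which no $\supset$-L, no $\lor$-R and no $\exists$-R rule is used. Then $\Gamma\longrightarrow B$ has an $\mathbf{I}$-proof.
   Context: Formulas are first-order formulas built from atomic formulas and the logical constants $\top$, $\bot$ (not counted as atomic) using $\land,\lor,\supset,\forall,\exists$; $\neg A$ abbreviates $A\supset\bot$; $B[t/x]$ is capture-avoiding substitution of term $t$ for free $x$ in $B$. A sequent $\Gamma\longrightarrow\Delta$ is a pair of finite multisets of formulas; $B,\Gamma$ denotes $\Gamma$ with an extra occurrence of $B$. A sequent is an axiom if $\top\in\Delta$ or some formula that is $\bot$ or atomic occurs in both $\Gamma$ and $\Delta$. Writing premises $\Rightarrow$ conclusion, the rules are all instances of: contr-L: $B,B,\Gamma\longrightarrow\Delta\Rightarrow B,\Gamma\longrightarrow\Delta$; contr-R: $\Gamma\longrightarrow\Delta,B,B\Rightarrow\Gamma\longrightarrow\Delta,B$; $\bot$-R: $\Gamma\longrightarrow\Delta,\bot\Rightarrow\Gamma\longrightarrow\Delta,D$; $\land$-L: $B,\Gamma\longrightarrow\Delta\Rightarrow B\land D,\Gamma\longrightarrow\Delta$ and $D,\Gamma\longrightarrow\Delta\Rightarrow B\land D,\Gamma\longrightarrow\Delta$; $\lor$-L: $B,\Gamma\longrightarrow\Delta$ and $D,\Gamma\longrightarrow\Delta\Rightarrow B\lor D,\Gamma\longrightarrow\Delta$; $\land$-R: $\Gamma\longrightarrow\Delta,B$ and $\Gamma\longrightarrow\Delta,D\Rightarrow\Gamma\longrightarrow\Delta,B\land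 D$; $\lor$-R: $\Gamma\longrightarrow\Delta,B\Rightarrow\Gamma\longrightarrow\Delta,B\lor D$ and $\Gamma\longrightarrow\Delta,D\Rightarrow\Gamma\longrightarrow\Delta,B\lor D$; $\supset$-L: $\Gamma\longrightarrow\Delta,B$ and $D,\Gamma\longrightarrow\Theta\Rightarrow B\supset D,\Gamma\longrightarrow\Delta,\Theta$; $\supset$-R: $B,\Gamma\longrightarrow\Delta,D\Rightarrow\Gamma\longrightarrow\Delta,B\supset D$; $\forall$-L: $B[t/x],\Gamma\longrightarrow\Delta\Rightarrow\forall x B,\Gamma\longrightarrow\Delta$; $\exists$-R: $\Gamma\longrightarrow\Delta,B[t/x]\Rightarrow\Gamma\longrightarrow\Delta,\exists x B$ ($t$ any term); $\exists$-L: $B[c/x],\Gamma\longrightarrow\Delta\Rightarrow\exists x B,\Gamma\longrightarrow\Delta$; $\forall$-R: $\Gamma\longrightarrow\Delta,B[c/x]\Rightarrow\Gamma\longrightarrow\Delta,\forall x B$, where the constant $c$ does not occur in the conclusion. A $\mathbf{C}$-proof (classical) is a finite tree of sequents with axioms at the leaves, each internal node being the conclusion of a rule instance whose premises are its children. An $\mathbf{I}$-proof (intuitionistic) is a $\mathbf{C}$-proof in which every sequent has exactly one formula in its succedent. A rule ''is used'' if some instance of that schema occurs in the proof. *)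

From Stdlib Require Import List Arith Bool Permutation.
Import ListNotations.
Set Implicit Arguments.

Section Syntax.
Variables (F P : Type).

(* Terms: bound/free variables as de Bruijn indices, eigen-constants
   (parameters) Par c, and applications of function symbols. *)
Inductive term : Type :=
| Var : nat -> term
| Par : nat -> term
| Fn  : F -> list term -> term.

Inductive formula : Type :=
| Atom : P -> list term -> formula
| FTop : formula
| FBot : formula
| FAnd : formula -> formula -> formula
| FOr  : formula -> formula -> formula
| FImp : formula -> formula -> formula
| FAll : formula -> formula     (* binds de Bruijn index 0 *)
| FEx  : formula -> formula.

Definition FNeg (A : formula) : formula := FImp A FBot.

Fixpoint lift_term (k : nat) (t : term) : term :=
  match t with
  | Var n => if k <=? n then Var (S n) else Var n
  | Par c => Par c
  | Fn f ts => Fn f (map (lift_term k) ts)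
  end.

Fixpoint subst_term (k : nat) (s : term) (t : term) : term :=
  match t with
  | Var n => if n =? k then s else if k <? n then Var (pred n) else Var n
  | Par c => Par c
  | Fn f ts => Fn f (map (subst_term k s) ts)
  end.

Fixpoint subst_form (k : nat) (s : term) (A : formula) : formula :=
  match A with
  | Atom p ts => Atom p (map (subst_term k s) ts)
  | FTop => FTop
  | FBot => FBot
  | FAnd A1 A2 => FAnd (subst_form k s A1) (subst_form k s A2)
  | FOr A1 A2 => FOr (subst_form k s A1) (subst_form k s A2)
  | FImp A1 A2 => FImp (subst_form k s A1) (subst_form k s A2)
  | FAll A1 => FAll (subst_form (S k) (lift_term 0 s) A1)
  | FEx A1 => FEx (subst_form (S k) (lift_term 0 s) A1)
  end.

(* B[t/x] where B is the body of a quantifier Qx B (x = index 0):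
   capture-avoiding by construction (de Bruijn). *)
Definition inst (B : formula) (t : term) : formula := subst_form 0 t B.

Fixpoint par_in_term (c : nat) (t : term) : bool :=
  match t with
  | Var _ => false
  | Par d => Nat.eqb c d
  | Fn _ ts => existsb (par_in_term c) ts
  end.

Fixpoint par_in_form (c : nat) (A : formula) : bool :=
  match A with
  | Atom _ ts => existsb (par_in_term c) ts
  | FTop | FBot => false
  | FAnd A1 A2 | FOr A1 A2 | FImp A1 A2 => par_in_form c A1 || par_in_form c A2
  | FAll A1 | FEx A1 => par_in_form c A1
  end.

Definition par_in_list (c : nat) (G : list formula) : bool :=
  existsb (par_in_form c) G.

Definition is_atomic (A : formula) : Prop :=
  match A with Atom _ _ => True | _ => False end.

Definition is_axiom (G D : list formula) : Prop :=
  In FTop D \/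
  exists A, (A = FBot \/ is_atomic A) /\ In A G /\ In A D.

Inductive rule : Type :=
| RContrL | RContrR | RBotR | RAndL | ROrL | RAndR | ROrR
| RImpL | RImpR | RAllL | RExR | RExL | RAllR.

(* Sequents are pairs of finite multisets, represented by lists taken up
   to permutation (constructor d_perm).  [deriv allowed single G D]:
   G --> D has a proof using only rule schemas r with [allowed r], and,
   if [single] is true, every sequent in the proof has exactly one
   formula in its succedent. *)
Inductive deriv (allowed : rule -> Prop) (single : bool)
  : list formula -> list formula -> Prop :=
| d_perm : forall G G' D D',
    Permutation G G' -> Permutation D D' ->
    deriv allowed single G D -> deriv allowed single G' D'
| d_ax : forall G D,
    (single = true -> length D = 1) ->
    is_axiom G D -> deriv allowed single G D
| d_contrL : forall A G D,
    allowed RContrL -> (single = true -> length D = 1) ->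
    deriv allowed single (A :: A :: G) D ->
    deriv allowed single (A :: G) D
| d_contrR : forall A G D,
    allowed RContrR -> (single = true -> length (D ++ [A]) = 1) ->
    deriv allowed single G (D ++ [A; A]) ->
    deriv allowed single G (D ++ [A])
| d_botR : forall A G D,
    allowed RBotR -> (single = true -> length (D ++ [A]) = 1) ->
    deriv allowed single G (D ++ [FBot]) ->
    deriv allowed single G (D ++ [A])
| d_andL1 : forall A1 A2 G D,
    allowed RAndL -> (single = true -> length D = 1) ->
    deriv allowed single (A1 :: G) D ->
    deriv allowed single (FAnd A1 A2 :: G) D
| d_andL2 : forall A1 A2 G D,
    allowed RAndL -> (single = true -> length D = 1) ->
    deriv allowed single (A2 :: G) D ->
    deriv allowed single (FAnd A1 A2 :: G) D
| d_orL : forall A1 A2 G D,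
    allowed ROrL -> (single = true -> length D = 1) ->
    deriv allowed single (A1 :: G) D ->
    deriv allowed single (A2 :: G) D ->
    deriv allowed single (FOr A1 A2 :: G) D
| d_andR : forall A1 A2 G D,
    allowed RAndR -> (single = true -> length (D ++ [FAnd A1 A2]) = 1) ->
    deriv allowed single G (D ++ [A1]) ->
    deriv allowed single G (D ++ [A2]) ->
    deriv allowed single G (D ++ [FAnd A1 A2])
| d_orR1 : forall A1 A2 G D,
    allowed ROrR -> (single = true -> length (D ++ [FOr A1 A2]) = 1) ->
    deriv allowed single G (D ++ [A1]) ->
    deriv allowed single G (D ++ [FOr A1 A2])
| d_orR2 : forall A1 A2 G D,
    allowed ROrR -> (single = true -> length (D ++ [FOr A1 A2]) = 1) ->
    deriv allowed single G (D ++ [A2]) ->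
    deriv allowed single G (D ++ [FOr A1 A2])
| d_impL : forall A1 A2 G D T,
    allowed RImpL -> (single = true -> length (D ++ T) = 1) ->
    deriv allowed single G (D ++ [A1]) ->
    deriv allowed single (A2 :: G) T ->
    deriv allowed single (FImp A1 A2 :: G) (D ++ T)
| d_impR : forall A1 A2 G D,
    allowed RImpR -> (single = true -> length (D ++ [FImp A1 A2]) = 1) ->
    deriv allowed single (A1 :: G) (D ++ [A2]) ->
    deriv allowed single G (D ++ [FImp A1 A2])
| d_allL : forall A t G D,
    allowed RAllL -> (single = true -> length D = 1) ->
    deriv allowed single (inst A t :: G) D ->
    deriv allowed single (FAll A :: G) D
| d_exR : forall A t G D,
    allowed RExR -> (single = true -> length (D ++ [FEx A]) = 1) ->
    deriv allowed single G (D ++ [inst A t]) ->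
    deriv allowed single G (D ++ [FEx A])
| d_exL : forall A c G D,
    allowed RExL -> (single = true -> length D = 1) ->
    par_in_list c (FEx A :: G) = false -> par_in_list c D = false ->
    deriv allowed single (inst A (Par c) :: G) D ->
    deriv allowed single (FEx A :: G) D
| d_allR : forall A c G D,
    allowed RAllR -> (single = true -> length (D ++ [FAll A]) = 1) ->
    par_in_list c G = false -> par_in_list c (D ++ [FAll A]) = false ->
    deriv allowed single G (D ++ [inst A (Par c)]) ->
    deriv allowed single G (D ++ [FAll A]).

Definition C_provable (G D : list formula) : Prop :=
  deriv (fun _ => True) false G D.

Definition I_provable (G D : list formula) : Prop :=
  deriv (fun _ => True) true G D.

End Syntax.

(* Let ncr be the calculus of C without contr-R, ⊃-L, ∨-R and ∃-R.  Each of
   its right rules acts on one succedent formula and keeps the others, so an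
   ncr-proof of a sequent with a one-formula succedent is an I-proof; it
   remains to show that contr-R is admissible in ncr.  The right rules of ncr
   are invertible, so two copies of a compound formula are contracted by
   inverting one copy in the premise of the rule introducing the other and
   contracting the resulting smaller formulas (an instance of a ∀-body counts
   as smaller than the ∀-formula).  A copy introduced by ⊥-R is discarded by
   dropping ⊥ from the premise, which is possible because the other copy
   remains in the succedent. *)

From Stdlib Require Import List Arith Bool Permutation Morphisms Lia Wf_nat.
Import ListNotations.

Arguments Var {F} _. Arguments Par {F} _. Arguments FTop {F P}. Arguments FBot {F P}.

Lemma perm_cons_cases {A : Type} {x z : A} {l l'} : Permutation (z :: l) (x :: l') ->
  (z = x /\ Permutation l l') \/
  exists m, Permutation l (x :: m) /\ Permutation l' (z :: m).
Proof.
  intros Hp. destruct (Permutation_in z Hp (in_eq z l)) as [<-|Hz].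
  - left; split; [reflexivity | exact (Permutation_cons_inv Hp)].
  - right. destruct (in_split _ _ Hz) as [l1 [l2 ->]]. exists (l1 ++ l2); split.
    + apply (Permutation_cons_inv (a := z)).
      rewrite Hp, <- Permutation_middle. apply perm_swap.
    + symmetry; apply Permutation_middle.
Qed.

Lemma perm_cons2_cases {A : Type} {x z : A} {l l'} : Permutation (z :: l) (x :: x :: l') ->
  (z = x /\ Permutation l (x :: l')) \/
  exists m, Permutation l (x :: x :: m) /\ Permutation l' (z :: m).
Proof.
  intros Hp. destruct (perm_cons_cases Hp) as [Hzx|[m [Hl Hxl]]]; [left; exact Hzx|].
  destruct (perm_cons_cases Hxl) as [[-> Hm]|[m' [Hl' Hm]]].
  - left; split; [reflexivity|]. rewrite Hl, Hm; reflexivity.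
  - right; exists m'; split; [rewrite Hl, Hm; reflexivity | exact Hl'].
Qed.

Lemma perm_rotate3 {A : Type} (x y z : A) l :
  Permutation (z :: x :: y :: l) (x :: y :: z :: l).
Proof. etransitivity; [apply perm_swap | apply perm_skip, perm_swap]. Qed.

Section Sequents.
Variables F P : Type.
Notation tm := (term F).
Notation fm := (formula F P).

Section TermInd.
Variable Q : tm -> Prop.
Hypotheses (HVar : forall n, Q (Var n)) (HPar : forall c, Q (Par c))
  (HFn : forall f ts, Forall Q ts -> Q (Fn f ts)).

Fixpoint term_nested_ind (t : tm) : Q t :=
  match t with
  | Var n => HVar n
  | Par c => HPar c
  | Fn f ts => HFn f ts ((fix go (l : list tm) : Forall Q l :=
      match l with
      | [] => Forall_nil Q
      | u :: l => Forall_cons u (term_nested_ind u) (go l)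
      end) ts)
  end.
End TermInd.

Definition eventually (Q : nat -> Prop) : Prop := exists n, forall c, n <= c -> Q c.

Lemma eventually_above {Q : nat -> Prop} n : eventually Q -> exists c, n <= c /\ Q c.
Proof. intros [m Hm]. exists (Nat.max n m). split; [lia | apply Hm; lia]. Qed.

Lemma eventually_existsb {A : Type} (p : nat -> A -> bool) l :
  (forall x, In x l -> eventually (fun c => p c x = false)) ->
  eventually (fun c => existsb (p c) l = false).
Proof.
  induction l as [|x l IH]; intros Hl; [exists 0; reflexivity|].
  destruct (Hl x (or_introl eq_refl)) as [n Hn].
  destruct IH as [m Hm]; [intros y Hy; apply Hl; right; exact Hy|].
  exists (Nat.max n m); intros c Hc; simpl. rewrite Hn, Hm; auto; lia.
Qed.

Lemma term_eventually_fresh (t : tm) : eventually (fun c => par_in_term c t = false).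
Proof.
  induction t as [n|d|f ts IH] using term_nested_ind.
  - exists 0; reflexivity.
  - exists (S d); intros c Hc; apply Nat.eqb_neq; lia.
  - apply eventually_existsb, Forall_forall, IH.
Qed.

Lemma form_eventually_fresh (A : fm) : eventually (fun c => par_in_form c A = false).
Proof.
  induction A as [p ts| | |A1 IH1 A2 IH2|A1 IH1 A2 IH2|A1 IH1 A2 IH2|A IH|A IH];
    simpl; try (exists 0; reflexivity); try exact IH;
    try (destruct IH1 as [n1 H1], IH2 as [n2 H2]; exists (Nat.max n1 n2);
         intros c Hc; rewrite H1, H2 by lia; reflexivity).
  apply eventually_existsb; intros t _; apply term_eventually_fresh.
Qed.

Lemma list_eventually_fresh (l : list fm) : eventually (fun c => par_in_list c l = false).
Proof. apply eventually_existsb; intros A _; apply form_eventually_fresh. Qed.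

Lemma fresh_split {e : nat} {A : fm} {G D : list fm} : par_in_list e (A :: G ++ D) = false ->
  par_in_form e A = false /\ par_in_list e G = false /\ par_in_list e D = false.
Proof. unfold par_in_list; simpl; rewrite existsb_app, !orb_false_iff; tauto. Qed.

Fixpoint rename_term (s : nat -> nat) (t : tm) : tm :=
  match t with
  | Var n => Var n
  | Par c => Par (s c)
  | Fn f ts => Fn f (map (rename_term s) ts)
  end.

Fixpoint rename_form (s : nat -> nat) (A : fm) : fm :=
  match A with
  | Atom p ts => Atom p (map (rename_term s) ts)
  | FTop => FTop
  | FBot => FBot
  | FAnd A1 A2 => FAnd (rename_form s A1) (rename_form s A2)
  | FOr A1 A2 => FOr (rename_form s A1) (rename_form s A2)
  | FImp A1 A2 => FImp (rename_form s A1) (rename_form s A2)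
  | FAll A1 => FAll (rename_form s A1)
  | FEx A1 => FEx (rename_form s A1)
  end.

Definition upd (s : nat -> nat) (e d : nat) : nat -> nat :=
  fun c => if c =? e then d else s c.

Lemma rename_lift_term s k t :
  rename_term s (lift_term k t) = lift_term k (rename_term s t).
Proof.
  induction t as [n|c|f ts IH] using term_nested_ind; simpl.
  - destruct (k <=? n); reflexivity.
  - reflexivity.
  - f_equal; rewrite !map_map; apply map_ext_Forall; exact IH.
Qed.

Lemma rename_subst_term s k u t :
  rename_term s (subst_term k u t) = subst_term k (rename_term s u) (rename_term s t).
Proof.
  induction t as [n|c|f ts IH] using term_nested_ind; simpl.
  - destruct (n =? k); [reflexivity|]. destruct (k <? n); reflexivity.
  - reflexivity.
  - f_equal; rewrite !map_map; apply map_ext_Forall; exact IH.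
Qed.

Lemma rename_subst_form s A : forall k u,
  rename_form s (subst_form k u A) = subst_form k (rename_term s u) (rename_form s A).
Proof.
  induction A; intros k u; simpl; f_equal; auto.
  - rewrite !map_map; apply map_ext; intros; apply rename_subst_term.
  - rewrite IHA, rename_lift_term; reflexivity.
  - rewrite IHA, rename_lift_term; reflexivity.
Qed.

Lemma rename_inst s A t :
  rename_form s (inst A t) = inst (rename_form s A) (rename_term s t).
Proof. apply rename_subst_form. Qed.

Lemma rename_term_upd s e d t :
  par_in_term e t = false -> rename_term (upd s e d) t = rename_term s t.
Proof.
  induction t as [n|c|f ts IH] using term_nested_ind; simpl; intros He.
  - reflexivity.
  - unfold upd; rewrite Nat.eqb_sym, He; reflexivity.
  - f_equal; induction IH as [|u ts Hu _ IHts]; simpl in *; [reflexivity|].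
    apply orb_false_iff in He as [He1 He2]; rewrite Hu, IHts; auto.
Qed.

Lemma rename_form_upd s e d A :
  par_in_form e A = false -> rename_form (upd s e d) A = rename_form s A.
Proof.
  induction A; simpl; intros He; rewrite ?orb_false_iff in He; f_equal; try tauto.
  induction l as [|u ts IH]; simpl in *; [reflexivity|].
  apply orb_false_iff in He as [He1 He2]; rewrite rename_term_upd, IH; auto.
Qed.

Lemma rename_list_upd s e d l :
  par_in_list e l = false -> map (rename_form (upd s e d)) l = map (rename_form s) l.
Proof.
  induction l as [|A l IH]; simpl; intros He; [reflexivity|].
  apply orb_false_iff in He as [He1 He2]; rewrite rename_form_upd, IH; auto.
Qed.

Lemma rename_term_id t : rename_term (fun c => c) t = t.
Proof.
  induction t as [n|c|f ts IH] using term_nested_ind; simpl; f_equal.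
  rewrite <- map_id; apply map_ext_Forall; exact IH.
Qed.

Lemma rename_form_id A : rename_form (fun c => c) A = A.
Proof.
  induction A; simpl; f_equal; auto.
  rewrite <- map_id; apply map_ext; apply rename_term_id.
Qed.

Lemma rename_list_id (l : list fm) : map (rename_form (fun c => c)) l = l.
Proof. rewrite <- map_id; apply map_ext, rename_form_id. Qed.

Lemma rename_upd_inst s e c A :
  par_in_form e A = false ->
  rename_form (upd s e c) (inst A (Par e)) = inst (rename_form s A) (Par c).
Proof.
  intros He. rewrite rename_inst, rename_form_upd by exact He.
  simpl; unfold upd; rewrite Nat.eqb_refl; reflexivity.
Qed.

Lemma rename_fresh_list e c l :
  par_in_list e l = false -> map (rename_form (upd (fun x => x) e c)) l = l.
Proof. intros He. rewrite rename_list_upd, rename_list_id by exact He; reflexivity. Qed.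

Lemma rename_is_axiom s G D :
  is_axiom G D -> is_axiom (map (rename_form s) G) (map (rename_form s) D).
Proof.
  intros [HT|[A [HA [HG HD]]]].
  - left; exact (in_map (rename_form s) _ _ HT).
  - right; exists (rename_form s A); split; [|split; apply in_map; assumption].
    destruct HA as [->|HA]; [left; reflexivity|right; destruct A; easy].
Qed.

Lemma is_axiom_mono {G G' D D' : list fm} : is_axiom G D -> incl G G' ->
  (forall A, In A D -> A = FTop \/ A = FBot \/ is_atomic A -> In A D') ->
  is_axiom G' D'.
Proof.
  intros [HT|[A [HA [HG HD]]]] HGG' HDD'.
  - left; apply HDD'; auto.
  - right; exists A; repeat split; auto; apply HDD'; tauto.
Qed.

(* The premise of an eigenvariable rule is required for every parameter
   beyond some bound rather than for one fresh parameter, so that weakening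
   and the commuting cases of inversion and contraction need no renaming. *)
Inductive ncr : list fm -> list fm -> Prop :=
| ncr_perm G G' D D' : Permutation G G' -> Permutation D D' -> ncr G D -> ncr G' D'
| ncr_ax G D : is_axiom G D -> ncr G D
| ncr_contrL A G D : ncr (A :: A :: G) D -> ncr (A :: G) D
| ncr_botR A G D : ncr G (FBot :: D) -> ncr G (A :: D)
| ncr_andL1 A1 A2 G D : ncr (A1 :: G) D -> ncr (FAnd A1 A2 :: G) D
| ncr_andL2 A1 A2 G D : ncr (A2 :: G) D -> ncr (FAnd A1 A2 :: G) D
| ncr_orL A1 A2 G D : ncr (A1 :: G) D -> ncr (A2 :: G) D -> ncr (FOr A1 A2 :: G) D
| ncr_andR A1 A2 G D : ncr G (A1 :: D) -> ncr G (A2 :: D) -> ncr G (FAnd A1 A2 :: D)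
| ncr_impR A1 A2 G D : ncr (A1 :: G) (A2 :: D) -> ncr G (FImp A1 A2 :: D)
| ncr_allL A t G D : ncr (inst A t :: G) D -> ncr (FAll A :: G) D
| ncr_exL A G D n :
    (forall c, n <= c -> ncr (inst A (Par c) :: G) D) -> ncr (FEx A :: G) D
| ncr_allR A G D n :
    (forall c, n <= c -> ncr G (inst A (Par c) :: D)) -> ncr G (FAll A :: D).

#[local] Instance ncr_Permutation :
  Proper (@Permutation fm ==> @Permutation fm ==> iff) ncr.
Proof.
  intros G G' HG D D' HD; split; apply ncr_perm; try assumption; symmetry; assumption.
Qed.

Lemma ncr_weakenL G D (H : list fm) : ncr G D -> ncr (G ++ H) D.
Proof.
  induction 1 as [G G' D D' HG HD _ IH|G D Hax| | | | | | | | | |];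
    simpl in *.
  - rewrite <- HG, <- HD; exact IH.
  - apply ncr_ax; eapply is_axiom_mono; [exact Hax | apply incl_appl, incl_refl | auto].
  - apply ncr_contrL; assumption.
  - apply ncr_botR; assumption.
  - apply ncr_andL1; assumption.
  - apply ncr_andL2; assumption.
  - apply ncr_orL; assumption.
  - apply ncr_andR; assumption.
  - apply ncr_impR; assumption.
  - eapply ncr_allL; eassumption.
  - eapply ncr_exL; eassumption.
  - eapply ncr_allR; eassumption.
Qed.

Lemma ncr_rename s {G D : list fm} :
  ncr G D -> ncr (map (rename_form s) G) (map (rename_form s) D).
Proof.
  intros HGD; revert s.
  induction HGD as [G G' D D' HG HD _ IH|G D Hax| | | | | | | |A t G D _ IH
    |A G D n _ IH|A G D n _ IH]; intros s; simpl in *.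
  - rewrite <- HG, <- HD; apply IH.
  - apply ncr_ax, rename_is_axiom, Hax.
  - apply ncr_contrL; auto.
  - apply ncr_botR; auto.
  - apply ncr_andL1; auto.
  - apply ncr_andL2; auto.
  - apply ncr_orL; auto.
  - apply ncr_andR; auto.
  - apply ncr_impR; auto.
  - apply ncr_allL with (rename_term s t); rewrite <- rename_inst; apply IH.
  - apply ncr_exL with 0; intros c _.
    destruct (eventually_above n (list_eventually_fresh (A :: G ++ D))) as [e [Hn He]].
    destruct (fresh_split He) as [HA [HG HD]].
    specialize (IH e Hn (upd s e c)); simpl in IH.
    rewrite rename_upd_inst, !rename_list_upd in IH by assumption; exact IH.
  - apply ncr_allR with 0; intros c _.
    destruct (eventually_above n (list_eventually_fresh (A :: G ++ D))) as [e [Hn He]].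
    destruct (fresh_split He) as [HA [HG HD]].
    specialize (IH e Hn (upd s e c)); simpl in IH.
    rewrite rename_upd_inst, !rename_list_upd in IH by assumption; exact IH.
Qed.

Lemma ncr_rename_eigenL e c A G D :
  par_in_form e A = false -> par_in_list e G = false -> par_in_list e D = false ->
  ncr (inst A (Par e) :: G) D -> ncr (inst A (Par c) :: G) D.
Proof.
  intros HA HG HD H. apply (ncr_rename (upd (fun x => x) e c)) in H. simpl in H.
  rewrite rename_upd_inst, rename_form_id, !rename_fresh_list in H by assumption.
  exact H.
Qed.

Lemma ncr_rename_eigenR e c A G D :
  par_in_form e A = false -> par_in_list e G = false -> par_in_list e D = false ->
  ncr G (inst A (Par e) :: D) -> ncr G (inst A (Par c) :: D).
Proof.
  intros HA HG HD H. apply (ncr_rename (upd (fun x => x) e c)) in H. simpl in H.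
  rewrite rename_upd_inst, rename_form_id, !rename_fresh_list in H by assumption.
  exact H.
Qed.

Fixpoint fsize (A : fm) : nat :=
  match A with
  | Atom _ _ | FTop | FBot => 0
  | FAnd A1 A2 | FOr A1 A2 | FImp A1 A2 => S (fsize A1 + fsize A2)
  | FAll A1 | FEx A1 => S (fsize A1)
  end.

Lemma fsize_subst A : forall k u, fsize (subst_form k u A) = fsize A.
Proof. induction A; intros; simpl; auto. Qed.

Inductive right_premise : fm -> list fm -> fm -> Prop :=
| rp_andl A1 A2 : right_premise (FAnd A1 A2) [] A1
| rp_andr A1 A2 : right_premise (FAnd A1 A2) [] A2
| rp_imp A1 A2 : right_premise (FImp A1 A2) [A1] A2
| rp_all A c : right_premise (FAll A) [] (inst A (Par c)).

Lemma ncr_right_inv {X H Y G D} Dl :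
  right_premise X H Y -> ncr G D -> Permutation D (X :: Dl) -> ncr (G ++ H) (Y :: Dl).
Proof.
  intros HR HGD; revert Dl.
  induction HGD as [G G' D D' HG HD _ IH|G D Hax|A G D _ IH|Z G D HGD IH
    |A1 A2 G D _ IH|A1 A2 G D _ IH|A1 A2 G D _ IH1 _ IH2
    |A1 A2 G D HGD1 IH1 HGD2 IH2|A1 A2 G D HGD IH|A t G D _ IH
    |A G D n _ IH|A G D n HGD IH]; intros Dl Hp; simpl.
  - rewrite <- HG; apply IH; rewrite HD; exact Hp.
  - apply ncr_ax; eapply is_axiom_mono; [exact Hax | apply incl_appl, incl_refl|].
    intros Z HZ HZa. destruct (Permutation_in Z Hp HZ) as [<-|HZ']; [|right; exact HZ'].
    destruct HR; simpl in HZa; intuition discriminate.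
  - apply ncr_contrL, IH, Hp.
  - destruct (perm_cons_cases Hp) as [[<- HD]|[D' [HD HDl]]].
    + apply ncr_botR; rewrite <- HD; apply ncr_weakenL, HGD.
    + rewrite HDl, perm_swap; apply ncr_botR; rewrite perm_swap.
      apply IH; rewrite HD; apply perm_swap.
  - apply ncr_andL1, IH, Hp.
  - apply ncr_andL2, IH, Hp.
  - apply ncr_orL; [apply IH1 | apply IH2]; exact Hp.
  - destruct (perm_cons_cases Hp) as [[<- HD]|[D' [HD HDl]]].
    + inversion HR; subst; rewrite app_nil_r, <- HD; assumption.
    + rewrite HDl, perm_swap; apply ncr_andR; rewrite perm_swap;
        [apply IH1 | apply IH2]; rewrite HD; apply perm_swap.
  - destruct (perm_cons_cases Hp) as [[<- HD]|[D' [HD HDl]]].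
    + inversion HR; subst; rewrite <- Permutation_cons_append, <- HD; exact HGD.
    + rewrite HDl, perm_swap; apply ncr_impR; rewrite perm_swap.
      apply IH; rewrite HD; apply perm_swap.
  - apply ncr_allL with t; apply IH, Hp.
  - apply ncr_exL with n; intros c Hc; apply IH; assumption.
  - destruct (perm_cons_cases Hp) as [[<- HD]|[D' [HD HDl]]].
    + inversion HR; subst; rewrite app_nil_r, <- HD.
      destruct (eventually_above n (list_eventually_fresh (A :: G ++ D)))
        as [e [Hn He]].
      destruct (fresh_split He) as [HA [HG HDe]].
      exact (ncr_rename_eigenR e c A G D HA HG HDe (HGD e Hn)).
    + rewrite HDl, perm_swap; apply ncr_allR with n; intros c Hc; rewrite perm_swap.
      apply (IH c Hc); rewrite HD; apply perm_swap.
Qed.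

Lemma ncr_botR_inv {G D} Dl :
  ncr G D -> Permutation D (FBot :: Dl) -> Dl <> [] -> ncr G Dl.
Proof.
  intros HGD; revert Dl.
  induction HGD as [G G' D D' HG HD _ IH|G D Hax|A G D _ IH|Z G D HGD IH
    |A1 A2 G D _ IH|A1 A2 G D _ IH|A1 A2 G D _ IH1 _ IH2
    |A1 A2 G D _ IH1 _ IH2|A1 A2 G D _ IH|A t G D _ IH
    |A G D n _ IH|A G D n _ IH]; intros Dl Hp Hne.
  - rewrite <- HG; apply IH; [rewrite HD; exact Hp | exact Hne].
  - destruct Hax as [HT|[A [HA [HG HD]]]].
    + apply ncr_ax; left.
      destruct (Permutation_in _ Hp HT) as [HTB|HT']; [discriminate | exact HT'].
    + destruct (Permutation_in _ Hp HD) as [<-|HD'].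
      * destruct Dl as [|Y Dl]; [contradiction|].
        apply ncr_botR, ncr_ax; right; exists FBot; simpl; auto.
      * apply ncr_ax; right; exists A; auto.
  - apply ncr_contrL, IH; assumption.
  - destruct (perm_cons_cases Hp) as [[-> HD]|[D' [HD HDl]]].
    + rewrite <- HD; apply IH; [reflexivity|].
      intros ->; apply Hne, Permutation_nil, HD.
    + rewrite HDl; apply ncr_botR, IH; [|discriminate].
      rewrite HD; apply perm_swap.
  - apply ncr_andL1, IH; assumption.
  - apply ncr_andL2, IH; assumption.
  - apply ncr_orL; [apply IH1 | apply IH2]; assumption.
  - destruct (perm_cons_cases Hp) as [[[=] _]|[D' [HD HDl]]].
    rewrite HDl; apply ncr_andR; [apply IH1 | apply IH2]; try discriminate;
      rewrite HD; apply perm_swap.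
  - destruct (perm_cons_cases Hp) as [[[=] _]|[D' [HD HDl]]].
    rewrite HDl; apply ncr_impR, IH; [|discriminate]; rewrite HD; apply perm_swap.
  - apply ncr_allL with t; apply IH; assumption.
  - apply ncr_exL with n; intros c Hc; apply IH; assumption.
  - destruct (perm_cons_cases Hp) as [[[=] _]|[D' [HD HDl]]].
    rewrite HDl; apply ncr_allR with n; intros c Hc.
    apply (IH c Hc); [|discriminate]; rewrite HD; apply perm_swap.
Qed.

Lemma ncr_contrR A {G D} Dl :
  ncr G D -> Permutation D (A :: A :: Dl) -> ncr G (A :: Dl).
Proof.
  revert G D Dl; induction A as [A IHA] using (induction_ltof1 _ fsize).
  assert (contract : forall B G Dl,
    fsize B < fsize A -> ncr G (B :: B :: Dl) -> ncr G (B :: Dl)).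
  { intros B G Dl HB HGD; exact (IHA B HB G _ Dl HGD (Permutation_refl _)). }
  clear IHA; intros G D Dl HGD; revert Dl.
  induction HGD as [G G' D D' HG HD _ IH|G D Hax|B G D _ IH|Z G D HGD IH
    |A1 A2 G D _ IH|A1 A2 G D _ IH|A1 A2 G D _ IH1 _ IH2
    |A1 A2 G D HGD1 IH1 HGD2 IH2|A1 A2 G D HGD IH|B t G D _ IH
    |B G D n _ IH|B G D n HGD IH]; intros Dl Hp.
  - rewrite <- HG; apply IH; rewrite HD; exact Hp.
  - apply ncr_ax; eapply is_axiom_mono; [exact Hax | apply incl_refl|].
    intros Z HZ _; apply (Permutation_in Z Hp) in HZ; simpl in *; tauto.
  - apply ncr_contrL, IH, Hp.
  - destruct (perm_cons2_cases Hp) as [[-> HD]|[D' [HD HDl]]].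
    + apply (ncr_botR_inv _ HGD); [apply perm_skip, HD | discriminate].
    + rewrite HDl, perm_swap; apply ncr_botR; rewrite perm_swap.
      apply IH; rewrite HD; apply perm_rotate3.
  - apply ncr_andL1, IH, Hp.
  - apply ncr_andL2, IH, Hp.
  - apply ncr_orL; [apply IH1 | apply IH2]; exact Hp.
  - destruct (perm_cons2_cases Hp) as [[<- HD]|[D' [HD HDl]]].
    + apply ncr_andR; apply contract; try (simpl; lia); rewrite <- (app_nil_r G);
        [apply (ncr_right_inv _ (rp_andl A1 A2) HGD1)
        |apply (ncr_right_inv _ (rp_andr A1 A2) HGD2)];
        rewrite HD; apply perm_swap.
    + rewrite HDl, perm_swap; apply ncr_andR; rewrite perm_swap;
        [apply IH1 | apply IH2]; rewrite HD; apply perm_rotate3.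
  - destruct (perm_cons2_cases Hp) as [[<- HD]|[D' [HD HDl]]].
    + apply ncr_impR, ncr_contrL; rewrite Permutation_cons_append.
      apply contract; [simpl; lia|].
      apply (ncr_right_inv _ (rp_imp A1 A2) HGD); rewrite HD; apply perm_swap.
    + rewrite HDl, perm_swap; apply ncr_impR; rewrite perm_swap.
      apply IH; rewrite HD; apply perm_rotate3.
  - apply ncr_allL with t; apply IH, Hp.
  - apply ncr_exL with n; intros c Hc; apply IH; assumption.
  - destruct (perm_cons2_cases Hp) as [[<- HD]|[D' [HD HDl]]].
    + apply ncr_allR with n; intros c Hc; apply contract.
      * unfold inst; rewrite fsize_subst; simpl; lia.
      * rewrite <- (app_nil_r G); apply (ncr_right_inv _ (rp_all B c) (HGD c Hc)).
        rewrite HD; apply perm_swap.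
    + rewrite HDl, perm_swap; apply ncr_allR with n; intros c Hc; rewrite perm_swap.
      apply (IH c Hc); rewrite HD; apply perm_rotate3.
Qed.

Lemma ncr_I_provable G D : ncr G D -> length D = 1 -> I_provable G D.
Proof.
  unfold I_provable.
  induction 1 as [G G' D D' HG HD _ IH|G D Hax| |A G D _ IH| | | |A1 A2 G D _ IH1 _ IH2
    |A1 A2 G D _ IH|A t G D _ IH|A G D n _ IH|A G D n _ IH]; intros Hl.
  - apply (d_perm HG HD), IH. rewrite (Permutation_length HD); exact Hl.
  - apply d_ax; auto.
  - apply d_contrL; auto.
  - destruct D; [|discriminate]. apply (d_botR A []); auto.
  - apply d_andL1; auto.
  - apply d_andL2; auto.
  - apply d_orL; auto.
  - destruct D; [|discriminate]. apply (d_andR A1 A2 []); auto.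
  - destruct D; [|discriminate]. apply (d_impR A2 []); auto.
  - apply (d_allL A t); auto.
  - destruct (eventually_above n (list_eventually_fresh (A :: G ++ D))) as [c [Hn Hc]].
    destruct (fresh_split Hc) as [HA [HG HD]].
    apply (d_exL A c); auto; unfold par_in_list in *; simpl; rewrite HA; assumption.
  - destruct D; [|discriminate].
    destruct (eventually_above n (list_eventually_fresh (A :: G ++ []))) as [c [Hn Hc]].
    destruct (fresh_split Hc) as [HA [HG _]].
    apply (d_allR A c []); auto; [unfold par_in_list; simpl; rewrite HA; reflexivity|].
    apply IH; auto.
Qed.

Lemma ncr_of_deriv (allowed : rule -> Prop) G D :
  (forall r, allowed r -> r <> RImpL /\ r <> ROrR /\ r <> RExR) ->
  deriv allowed false G D -> ncr G D.
Proof.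
  intros Hallowed.
  induction 1 as [G G' D D' HG HD _ IH|G D _ Hax|A G D _ _ _ IH|A G D _ _ _ IH
    |A G D _ _ _ IH|A1 A2 G D _ _ _ IH|A1 A2 G D _ _ _ IH|A1 A2 G D _ _ _ IH1 _ IH2
    |A1 A2 G D _ _ _ IH1 _ IH2|A1 A2 G D Hr| A1 A2 G D Hr|A1 A2 G D T Hr
    |A1 A2 G D _ _ _ IH|A t G D _ _ _ IH|A t G D Hr|A c G D _ _ HcG HcD _ IH
    |A c G D _ _ HcG HcD _ IH].
  all: try (destruct (Hallowed _ Hr) as [? [? ?]]; congruence).
  all: rewrite <- ?Permutation_cons_append.
  - rewrite <- HG, <- HD; exact IH.
  - apply ncr_ax, Hax.
  - apply ncr_contrL, IH.
  - apply (ncr_contrR A _ IH). rewrite Permutation_app_comm; reflexivity.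
  - apply ncr_botR; rewrite (Permutation_cons_append D); exact IH.
  - apply ncr_andL1, IH.
  - apply ncr_andL2, IH.
  - apply ncr_orL; assumption.
  - apply ncr_andR; rewrite (Permutation_cons_append D); assumption.
  - apply ncr_impR; rewrite (Permutation_cons_append D); exact IH.
  - apply ncr_allL with t; exact IH.
  - simpl in HcG; apply orb_false_iff in HcG as [HcA HcG].
    apply ncr_exL with 0; intros c' _. apply (ncr_rename_eigenL c); assumption.
  - unfold par_in_list in HcD; rewrite existsb_app in HcD; simpl in HcD.
    rewrite orb_false_r, orb_false_iff in HcD; destruct HcD as [HcD HcA].
    apply ncr_allR with 0; intros c' _.
    apply (ncr_rename_eigenR c); [assumption..|].
    rewrite (Permutation_cons_append D); exact IH.
Qed.

End Sequents.

Theorem theorem6 (F P : Type) (G : list (formula F P)) (B : formula F P) :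
  deriv (fun r => r <> RImpL /\ r <> ROrR /\ r <> RExR) false G [B] ->
  I_provable G [B].
Proof.
  intros HC. apply ncr_I_provable; [|reflexivity].
  exact (ncr_of_deriv _ _ _ _ _ (fun r Hr => Hr) HC).
Qed.
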